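(* Let $K\subseteq\mathbb{R}^n$ be a proper cone and let $A\in\mathbb{R}^{n\times n}$ be $K$-monotone. Let $A=U-V$ be a $K$-regular splitting and let $U=F-G$ be a $K$-weak regular splitting of type II such that $VF^{-1}G=GF^{-1}V$. Fix a positive integer $s$ and let $$T_{s}=(F^{-1}G)^{s}+\sum_{j=0}^{s-1}(F^{-1}G)^{j}F^{-1}V,\qquad \widehat{T}_{s}=(GF^{-1})^{s}+\sum_{j=0}^{s-1}(GF^{-1})^{j}VF^{-1}.$$ Then $T_s$ and $\widehat T_s$ induce the same splitting $A=B-C$, where $B=A(I-T_s)^{-1}$ and $C=B-A$ (so $T_s=B^{-1}C$); that is, $X:=(I-\widehat{T}_s)^{-1}A$ equals $B$, and with $Y:=X-A$ one has $\widehat T_s = YX^{-1}$. Further, $A=X-Y$ is the unique splitting of $A$ with $\widehat T_s=YX^{-1}$, and it is a $K$-weak regular splitting of type II.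
   Context: A proper cone $K\subseteq\mathbb{R}^n$ is a closed, convex, pointed, solid cone. For $M\in\mathbb{R}^{n\times n}$, $M\geq_K 0$ means $MK\subseteq K$. A matrix $A$ is $K$-monotone if $A$ is nonsingular and $A^{-1}\geq_K 0$. A splitting $A=U-V$ (with $U$ nonsingular) is $K$-regular if $U^{-1}\geq_K 0$ and $V\geq_K 0$; it is a $K$-weak regular splitting of type II if $U^{-1}\geq_K 0$ and $VU^{-1}\geq_K 0$. A splitting $A=X-Y$ is said to be induced by a matrix $T$ if $T=X^{-1}Y$ (respectively, for type II considerations, $T=YX^{-1}$). *)

From HB Require Import structures.
From mathcomp Require Import all_boot all_order all_algebra.
From mathcomp Require Import all_classical all_reals all_analysis.
Set Implicit Arguments. Unset Strict Implicit. Unset Printing Implicit Defensive.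
Import Order.TTheory GRing.Theory Num.Theory.
Import numFieldNormedType.Exports.
Local Open Scope classical_set_scope.
Local Open Scope ring_scope.

Definition is_cone (R : realType) (n : nat) (K : set 'cV[R]_n) : Prop :=
  K 0 /\ forall (a : R) x, 0 <= a -> K x -> K (a *: x).

Definition is_convex_set (R : realType) (n : nat) (K : set 'cV[R]_n) : Prop :=
  forall (t : R) x y, 0 <= t -> t <= 1 -> K x -> K y -> K (t *: x + (1 - t) *: y).

Definition is_pointed (R : realType) (n : nat) (K : set 'cV[R]_n) : Prop :=
  forall x, K x -> K (- x) -> x = 0.

Definition is_solid (R : realType) (n : nat) (K : set 'cV[R]_n) : Prop :=
  (interior K) !=set0.

Definition proper_cone (R : realType) (n : nat) (K : set 'cV[R]_n) : Prop :=
  [/\ is_cone K, closed K, is_convex_set K, is_pointed K & is_solid K].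

Definition K_nonneg (R : realType) (n : nat) (K : set 'cV[R]_n) (M : 'M[R]_n) : Prop :=
  forall x, K x -> K (M *m x).

Definition K_monotone (R : realType) (n : nat) (K : set 'cV[R]_n) (A : 'M[R]_n) : Prop :=
  A \in unitmx /\ K_nonneg K (invmx A).

Definition K_regular_splitting (R : realType) (n : nat) (K : set 'cV[R]_n)
  (A U V : 'M[R]_n) : Prop :=
  [/\ A = U - V, U \in unitmx, K_nonneg K (invmx U) & K_nonneg K V].

Definition K_weak_regular_II (R : realType) (n : nat) (K : set 'cV[R]_n)
  (A U V : 'M[R]_n) : Prop :=
  [/\ A = U - V, U \in unitmx, K_nonneg K (invmx U) & K_nonneg K (V *m invmx U)].

Definition Ts (R : realType) (n : nat) (F G V : 'M[R]_n) (s : nat) : 'M[R]_n :=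
  (invmx F *m G) ^+ s + \sum_(j < s) ((invmx F *m G) ^+ j *m invmx F *m V).

Definition That (R : realType) (n : nat) (F G V : 'M[R]_n) (s : nat) : 'M[R]_n :=
  (G *m invmx F) ^+ s + \sum_(j < s) ((G *m invmx F) ^+ j *m V *m invmx F).

From HB Require Import structures.
From mathcomp Require Import all_boot all_order all_algebra.
From mathcomp Require Import all_classical all_reals all_analysis.
From mathcomp Require Import lra.
Set Implicit Arguments. Unset Strict Implicit. Unset Printing Implicit Defensive.
Import Order.TTheory GRing.Theory Num.Theory.
Import numFieldNormedType.Exports.
Local Open Scope ring_scope.

(* With Q := G F^-1 and S := 1 + Q + ... + Q^(s-1), a direct computation gives
   1 - That_s = S (A F^-1) and T_s = F^-1 That_s F.  The hypothesis
   V F^-1 G = G F^-1 V says that Q commutes with V F^-1, hence with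
   A F^-1 = 1 - Q - V F^-1, so S commutes with A F^-1; this yields
   (1 - That_s) A = A (1 - T_s), i.e. X = B, and X^-1 = F^-1 S >=_K 0.
   The analytic point is the invertibility of S.  Since (1 - Q) S = 1 - Q^s
   and U^-1 (1 - Q^s) - F^-1 = F^-1 (S - 1) >=_K 0, every vector x fixed by
   Q^s satisfies c U^-1 e -/+ m F^-1 x \in K for an interior point e of K and
   all m; dividing by m and using that K is closed and pointed gives
   F^-1 x = 0. *)

Section GeometricSum.
Variable R : pzRingType.

Lemma subr1X (x : R) m : 1 - x ^+ m = (1 - x) * \sum_(i < m) x ^+ i.
Proof. by rewrite -opprB subrX1 -mulNr opprB. Qed.

Lemma commr_geom_sum (x y : R) m : GRing.comm x y -> GRing.comm x (\sum_(i < m) y ^+ i).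
Proof. by move=> cxy; apply: commr_sum => i _; apply: commrX. Qed.

End GeometricSum.

Section InducedSplittings.
Variables (R : comUnitRingType) (n : nat).
Implicit Types A M N T X : 'M[R]_n.

Lemma invmxM A X : A \in unitmx -> X \in unitmx ->
  invmx (A *m X) = invmx X *m invmx A.
Proof.
move=> Au Xu; have AXu : A *m X \in unitmx by rewrite unitmx_mul Au Xu.
rewrite -[RHS]mul1mx -(mulVmx AXu) -!mulmxA (mulmxA X) mulmxV // mul1mx.
by rewrite mulmxV // mulmx1.
Qed.

Lemma invmx_intertwine A M N : M \in unitmx -> N \in unitmx ->
  N *m A = A *m M -> invmx N *m A = A *m invmx M.
Proof.
by move=> Mu Nu hA; rewrite -[LHS](mulmxK Mu) -(mulmxA (invmx N)) -hA mulKmx.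
Qed.

Lemma induced_splitting A T : A \in unitmx -> 1%:M - T \in unitmx ->
  T = invmx (A *m invmx (1%:M - T)) *m (A *m invmx (1%:M - T) - A).
Proof.
move=> Au Tu; rewrite invmxM ?unitmx_inv // invmxK mulmxBr -mulmxA mulKmx //.
by rewrite mulmxKV // mulmxV // subKr.
Qed.

Lemma induced_splitting_II A T : A \in unitmx -> 1%:M - T \in unitmx ->
  T = (invmx (1%:M - T) *m A - A) *m invmx (invmx (1%:M - T) *m A).
Proof.
move=> Au Tu; rewrite invmxM ?unitmx_inv // invmxK mulmxBl !mulmxA.
by rewrite mulmxK // mulVmx // mulmxV // mul1mx subKr.
Qed.

Lemma induced_splitting_II_unique A T X : A \in unitmx -> X \in unitmx ->
  T = (X - A) *m invmx X -> X = invmx (1%:M - T) *m A.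
Proof.
move=> Au Xu ->; rewrite mulmxBl mulmxV // subKr.
by rewrite invmxM ?unitmx_inv // invmxK mulmxKV.
Qed.

End InducedSplittings.

Lemma unitmx_of_ker0 (R : fieldType) n (S : 'M[R]_n) :
  (forall x : 'cV_n, S *m x = 0 -> x = 0) -> S \in unitmx.
Proof.
move=> kerS; rewrite -unitmx_tr unitmxE unitfE; apply/det0P => -[v v_neq0 vS].
have /kerS/(congr1 trmx) : S *m v^T = 0 by rewrite -[S]trmxK -trmx_mul vS trmx0.
by rewrite trmxK trmx0 => v0; rewrite v0 eqxx in v_neq0.
Qed.

Section IterationMatrices.
Variables (R : realType) (n : nat) (F G V : 'M[R]_n).

Hypothesis Fu : F \in unitmx.

Lemma Ts_conj s : Ts F G V s = invmx F *m That F G V s *m F.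
Proof.
have conj_exp j : (invmx F *m G) ^+ j = invmx F *m (G *m invmx F) ^+ j *m F.
  elim: j => [|j IH]; first by rewrite !expr0 mulmx1 mulVmx.
  by rewrite exprS IH exprS -mulmxE !mulmxA.
rewrite /Ts /That conj_exp mulmxDr mulmxDl mulmx_sumr mulmx_suml; congr (_ + _).
apply: eq_bigr => j _; rewrite conj_exp !mulmxA mulmxK // mulmxKV //.
Qed.

Lemma That_geom s : That F G V s =
  (G *m invmx F) ^+ s + (\sum_(j < s) (G *m invmx F) ^+ j) *m (V *m invmx F).
Proof.
by rewrite /That mulmx_suml; congr (_ + _); apply: eq_bigr => j _; rewrite mulmxA.
Qed.

Lemma one_sub_That s : 1%:M - That F G V s =
  (\sum_(j < s) (G *m invmx F) ^+ j) *m (1%:M - G *m invmx F - V *m invmx F).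
Proof.
rewrite That_geom !mulmxE !idmxE mulrBr opprD addrA subr1X; congr (_ - _).
by apply/commr_geom_sum/commr_sym/commrB; [apply: commr1 | apply: commr_refl].
Qed.

Lemma one_sub_Ts s :
  1%:M - Ts F G V s = invmx F *m (1%:M - That F G V s) *m F.
Proof. by rewrite Ts_conj mulmxBr mulmxBl mulmx1 mulVmx. Qed.

Variable A : 'M[R]_n.
Hypothesis AE : A = F - G - V.

Lemma one_sub_That_factor s :
  1%:M - That F G V s = (\sum_(j < s) (G *m invmx F) ^+ j) *m (A *m invmx F).
Proof. by rewrite one_sub_That AE !mulmxBl mulmxV. Qed.

Hypothesis comm_VG : V *m invmx F *m G = G *m invmx F *m V.

Lemma geom_sum_comm s : (\sum_(j < s) (G *m invmx F) ^+ j) *m (A *m invmx F) =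
  A *m invmx F *m \sum_(j < s) (G *m invmx F) ^+ j.
Proof.
have QW : GRing.comm (G *m invmx F) (V *m invmx F).
  by rewrite /GRing.comm -!mulmxE !mulmxA comm_VG.
apply/commr_sym/commr_geom_sum/commr_sym; rewrite AE !mulmxBl mulmxV //.
by apply: commrB => //; apply: commrB; [apply: commr1 | apply: commr_refl].
Qed.

Lemma one_sub_That_intertwine s :
  (1%:M - That F G V s) *m A = A *m (1%:M - Ts F G V s).
Proof.
have ZM : A *m invmx F *m (1%:M - That F G V s) =
          (1%:M - That F G V s) *m (A *m invmx F).
  by rewrite one_sub_That_factor mulmxA -geom_sum_comm.
by rewrite one_sub_Ts !mulmxA ZM -mulmxA mulmxKV.
Qed.

End IterationMatrices.

Section ProperCone.
Variables (R : realType) (n : nat) (K : set 'cV[R]_n).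
Hypothesis hK : proper_cone K.

Lemma cone0 : K 0.
Proof. by case: hK => -[]. Qed.

Lemma coneZ a x : 0 <= a -> K x -> K (a *: x).
Proof. by case: hK => -[_ KZ] *; apply: KZ. Qed.

Lemma coneD x y : K x -> K y -> K (x + y).
Proof.
case: hK => _ _ Kconv _ _ Kx Ky.
have -> : x + y = 2 *: (2^-1 *: x + (1 - 2^-1) *: y).
  rewrite (_ : 1 - 2^-1 = 2^-1 :> R); last by lra.
  by rewrite -scalerDr scalerA mulfV ?pnatr_eq0 // scale1r.
by apply: coneZ => //; apply: Kconv => //; lra.
Qed.

Lemma cone_sum (I : Type) (r : seq I) (P : pred I) (f : I -> 'cV_n) :
  (forall i, P i -> K (f i)) -> K (\sum_(i <- r | P i) f i).
Proof. by move=> Kf; apply: big_ind => //; [exact: cone0 | exact: coneD]. Qed.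

Lemma cone_pointed x : K x -> K (- x) -> x = 0.
Proof. by case: hK => _ _ _ Kpt _; apply: Kpt. Qed.

Lemma cone_order_unit :
  exists2 e, K e & forall x, exists2 c : R, 0 <= c & K (c *: e - x).
Proof.
case: hK => _ _ _ _ [e /nbhs_normP[r r_gt0 ball_e]].
exists e => [|x]; first by apply: ball_e; rewrite /= subrr normr0.
pose t := r / (`|x| + 1).
have t_gt0 : 0 < t by rewrite divr_gt0 // ltr_pwDr.
have Ket : K (e - t *: x).
  apply: ball_e; rewrite /= opprB addrC subrK mx_normZ gtr0_norm //.
  rewrite /t mulrAC ltr_pdivrMr ?ltr_pwDr // ltr_pM2l //; lra.
have tV_ge0 : 0 <= t^-1 by rewrite invr_ge0 ltW.
exists t^-1 => //; have := coneZ tV_ge0 Ket.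
by rewrite scalerBr scalerA mulVf ?gt_eqF // scale1r.
Qed.

Lemma cone_archimedean w z : (forall m : nat, K (w - m%:R *: z)) -> K (- z).
Proof.
move=> Kwz; have Kcl : closed K by case: hK.
have Ku m : K (harmonic m *: w - z).
  have := coneZ (ltW (harmonic_gt0 m)) (Kwz m.+1).
  by rewrite scalerBr scalerA mulVf ?pnatr_eq0 // scale1r.
have cvg_u : ((fun m => harmonic m *: w - z) @ \oo --> 0 *: w - z)%classic.
  apply: cvgB; last exact: cvg_cst.
  by apply: cvgZ; [exact: cvg_harmonic | exact: cvg_cst].
rewrite -[- z]add0r -(scale0r w).
by apply: (closed_cvg _ Kcl _ _ cvg_u) => //; apply: nearW.
Qed.

Lemma K_nonneg1 : K_nonneg K 1%:M.
Proof. by move=> x Kx; rewrite mul1mx. Qed.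

Lemma K_nonneg_mul M N : K_nonneg K M -> K_nonneg K N -> K_nonneg K (M *m N).
Proof. by move=> KM KN x Kx; rewrite -mulmxA; apply/KM/KN. Qed.

Lemma K_nonneg_exp M m : K_nonneg K M -> K_nonneg K (M ^+ m).
Proof.
move=> KM; elim: m => [|m IH]; first exact: K_nonneg1.
by rewrite exprS; apply: K_nonneg_mul.
Qed.

Lemma K_nonneg_add M N : K_nonneg K M -> K_nonneg K N -> K_nonneg K (M + N).
Proof.
by move=> KM KN x Kx; rewrite mulmxDl; apply: coneD; [apply: KM | apply: KN].
Qed.

Lemma K_nonneg_sum (I : Type) (r : seq I) (P : pred I) (f : I -> 'M[R]_n) :
  (forall i, P i -> K_nonneg K (f i)) -> K_nonneg K (\sum_(i <- r | P i) f i).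
Proof. by move=> Kf x Kx; rewrite mulmx_suml; apply: cone_sum => i Pi; apply: Kf. Qed.

Lemma K_nonneg_geom_sum M m : K_nonneg K M -> K_nonneg K (\sum_(i < m) M ^+ i).
Proof. by move=> KM; apply: K_nonneg_sum => i _; apply: K_nonneg_exp. Qed.

Section FixedVectors.
Variables W P M : 'M[R]_n.
Hypotheses (KW : K_nonneg K W) (KM : K_nonneg K M).
Hypothesis KWP : K_nonneg K (W *m (1%:M - M) - P).

Lemma K_nonneg_sub_geom_sum m : K_nonneg K (W - P *m \sum_(i < m) M ^+ i).
Proof.
have -> : W - P *m \sum_(i < m) M ^+ i =
          W *m M ^+ m + (W *m (1%:M - M) - P) *m \sum_(i < m) M ^+ i.
  rewrite mulmxBl -mulmxA !mulmxE !idmxE -subr1X mulrBr mulr1.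
  by rewrite [RHS]addrC [W - _ - _]addrAC subrK.
apply: K_nonneg_add; apply: K_nonneg_mul => //.
  exact: K_nonneg_exp.
exact: K_nonneg_geom_sum.
Qed.

Hypothesis KP : K_nonneg K P.

Lemma K_nonneg_fixed_vector (x : 'cV[R]_n) : M *m x = x -> P *m x = 0.
Proof.
have neg_fixed y : M *m y = y -> K (- (P *m y)).
  (* With [S := \sum_(i < m) M ^+ i], so that [S y = m y], add the images of
     [c e] under [W - P S] and of [c e - y] under [P S]. *)
  move=> My; have [e Ke e_unit] := cone_order_unit; have [c c_ge0 Kce] := e_unit y.
  apply: (cone_archimedean (w := c *: (W *m e))) => m.
  have geom_y : (\sum_(i < m) M ^+ i) *m y = m%:R *: y.
    rewrite mulmx_suml (eq_bigr (fun=> y)) ?sumr_const ?card_ord ?scaler_nat //.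
    move=> i _; elim: (val i) => [|k IH]; first by rewrite mul1mx.
    by rewrite exprSr -mulmxE -mulmxA My IH.
  have := coneD (K_nonneg_sub_geom_sum m (coneZ c_ge0 Ke))
    (K_nonneg_mul KP (K_nonneg_geom_sum m KM) Kce).
  by rewrite -mulmxA !mulmxBr mulmxBl -!scalemxAr geom_y mulmxA addrA subrK -scalemxAr.
move=> Mx; apply: cone_pointed; last exact: neg_fixed.
by have := neg_fixed (- x); rewrite !mulmxN opprK Mx; apply.
Qed.

Lemma K_nonneg_one_sub_unitmx : P \in unitmx -> 1%:M - M \in unitmx.
Proof.
move=> Pu; apply: unitmx_of_ker0 => x /eqP; rewrite mulmxBl mul1mx subr_eq0 eq_sym.
by move=> /eqP/K_nonneg_fixed_vector Px0; rewrite -(mulKmx Pu x) Px0 mulmx0.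
Qed.

End FixedVectors.

Lemma weak_regular_II_geom_sum_unitmx U F G s :
  K_monotone K U -> K_weak_regular_II K U F G -> (0 < s)%N ->
  \sum_(j < s) (G *m invmx F) ^+ j \in unitmx.
Proof.
case=> Uu KUi [UFG Fu KFi KQ]; case: s => // s _; set Q := G *m invmx F.
have UiQ : invmx U *m (1%:M - Q) = invmx F.
  have UQ : U = (1%:M - Q) *m F by rewrite UFG mulmxBl mul1mx mulmxKV.
  by rewrite -[LHS](mulmxK Fu) -(mulmxA (invmx U)) -UQ mulVmx ?mul1mx.
suff : (1%:M - Q) *m \sum_(j < s.+1) Q ^+ j \in unitmx by rewrite unitmx_mul => /andP[].
have -> : (1%:M - Q) *m \sum_(j < s.+1) Q ^+ j = 1%:M - Q ^+ s.+1.
  by rewrite subr1X.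
apply: (K_nonneg_one_sub_unitmx (W := invmx U) (P := invmx F)); rewrite ?unitmx_inv //.
- exact: K_nonneg_exp.
- rewrite subr1X -mulmxE mulmxA UiQ big_ord_recl expr0 mulmxDr mulmx1 addrC addKr.
  by apply: K_nonneg_mul => //; apply: K_nonneg_sum => j _; apply: K_nonneg_exp.
Qed.

End ProperCone.

Theorem theorem3p6 (R : realType) (n : nat) (K : set 'cV[R]_n)
  (A U V F G : 'M[R]_n) (s : nat) :
  proper_cone K ->
  K_monotone K A ->
  K_regular_splitting K A U V ->
  K_weak_regular_II K U F G ->
  V *m invmx F *m G = G *m invmx F *m V ->
  (0 < s)%N ->
  let B := A *m invmx (1%:M - Ts F G V s) in
  let C := B - A in
  let X := invmx (1%:M - That F G V s) *m A in
  let Y := X - A in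
  [/\ (1%:M - Ts F G V s) \in unitmx /\ (1%:M - That F G V s) \in unitmx,
      B \in unitmx /\ Ts F G V s = invmx B *m C,
      X = B /\ That F G V s = Y *m invmx X,
      (forall X' Y' : 'M[R]_n, A = X' - Y' -> X' \in unitmx ->
          That F G V s = Y' *m invmx X' -> X' = X /\ Y' = Y)
    & K_weak_regular_II K A X Y].
Proof.
move=> hK [Au _] [AUV Uu KUi KV] UFG_wr comm_VG s_gt0 B C X Y.
have [UFG Fu KFi KQ] := UFG_wr.
have AE : A = F - G - V by rewrite AUV UFG.
have Su := weak_regular_II_geom_sum_unitmx hK (conj Uu KUi) UFG_wr s_gt0.
have Thatu : 1%:M - That F G V s \in unitmx.
  by rewrite (one_sub_That_factor Fu AE) !unitmx_mul Su Au unitmx_inv Fu.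
have Tsu : 1%:M - Ts F G V s \in unitmx.
  by rewrite one_sub_Ts // !unitmx_mul unitmx_inv Fu Thatu.
have XB : X = B.
  by apply: invmx_intertwine => //; apply: one_sub_That_intertwine.
have Xu : X \in unitmx by rewrite XB unitmx_mul Au unitmx_inv.
split=> //.
- split; first by rewrite -XB.
  by rewrite /C /B; apply: induced_splitting.
- by split=> //; rewrite /Y /X; apply: induced_splitting_II.
- move=> X' Y' AXY X'u hT; have Y'E : Y' = X' - A by rewrite AXY subKr.
  by rewrite Y'E in hT; rewrite /Y /X -(induced_splitting_II_unique Au X'u hT).
split=> //; first by rewrite subKr.
  rewrite /X invmxM ?unitmx_inv // invmxK (one_sub_That_factor Fu AE).
  rewrite (geom_sum_comm Fu AE comm_VG) mulmxA mulKmx //.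
  by apply: K_nonneg_mul => //; apply: (K_nonneg_geom_sum hK).
rewrite -(induced_splitting_II Au Thatu) That_geom.
apply: (K_nonneg_add hK); first exact: K_nonneg_exp.
by apply: K_nonneg_mul; [apply: (K_nonneg_geom_sum hK) | apply: K_nonneg_mul].
Qed.
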